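(* For any $s\ge1$, let $\hat{\mathbf{w}}_s$ be the solution of $\mathrm{DS}(\hat\gamma_s)$. Let $S_s\subseteq[d]$ satisfy $|S_s|=k$ and $|\hat w_{s,i}|\ge|\hat w_{s,j}|$ for every $i\in S_s$ and $j\in[d]\setminus S_s$. Let $\mathbf{w}_s=\mathbf{w}^\ast(S\cap S_s)$. Then $\|\mathbf{w}_s-\mathbf{w}^\ast\|_1\le\|\hat{\mathbf{w}}_s-\mathbf{w}^\ast\|_1$.
   Context: Setting. Integers $d,k$ with $3\le k\le d-3$, horizon $T$. At each round $t$ an instance $\mathbf{x}_t\in\mathbb{R}^d$ with $\|\mathbf{x}_t\|_\infty\le1$ arrives, of which the learner observes at most $k$ coordinates; $y_t=\langle\mathbf{w}^\ast,\mathbf{x}_t\rangle+\eta_t$ with $\eta_t$ independent $\mathcal{N}(0,\sigma^2)$ and $\|\mathbf{w}^\ast\|_1\le1$, and $\|\mathbf{w}^\ast\|_0\le k$. $S=\mathrm{Supp}(\mathbf{w}^\ast)$. $\mathbf{u}(A)$ is $\mathbf{u}$ with coordinates outside $A$ zeroed. $g_{d,k}=\frac{(d-1)(d-2)}{(k-1)(k-2)}$. SAMPLING$(k,d,\mathbf{w})$: draw $I_1\in[d]$ with probability $|w_i|/\|\mathbf{w}\|_1$, then $k-1$ distinct indices uniformly without replacement from $[d]\setminus\{I_1\}$; return the $k$-set. Exploration rounds $t=s^2$: $B_s=$SAMPLING$(k,d,\hat{\mathbf{w}}_{s-1})$ (with $\hat{\mathbf{w}}_0=\frac1d\mathbf{1}_d$);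 observe $x_{t,i}$, $i\in B_s$, and $y_t$. With $\mathbb{P}$ the probability over $B_s$ given the past, $\hat x_{t,i}=\frac{x_{t,i}}{\mathbb{P}[i\in B_s]}\mathbb{I}_{i\in B_s}$, $h_t[i,i]=\frac{x_{t,i}^2}{\mathbb{P}[i\in B_s]}\mathbb{I}_{i\in B_s}$, $h_t[i,j]=\frac{x_{t,i}x_{t,j}}{\mathbb{P}[i,j\in B_s]}\mathbb{I}_{i,j\in B_s}$; $\hat{\mathbf{X}}_{\mathcal{I}_s}\mathbf{Y}_{\mathcal{I}_s}=\sum_{\tau=1}^s\hat{\mathbf{x}}_{\tau^2}y_{\tau^2}$, $\mathbf{H}_{\mathcal{I}_s}=\sum_{\tau=1}^s\mathbf{h}_{\tau^2}$. $\mathrm{DS}(\gamma)$ is the program: minimize $\|\mathbf{w}\|_1$ over $\mathbf{w}\in\mathbb{R}^d$ subject to $\|\frac1s\hat{\mathbf{X}}_{\mathcal{I}_s}\mathbf{Y}_{\mathcal{I}_s}-\frac1s\mathbf{H}_{\mathcal{I}_s}\mathbf{w}\|_\infty\le\gamma$, and $\hat\gamma_s>0$ is the algorithm's data-dependent threshold at exploration index $s$. *)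

From mathcomp Require Import all_boot all_order all_algebra.
Set Implicit Arguments. Unset Strict Implicit. Unset Printing Implicit Defensive.
Import Order.TTheory GRing.Theory Num.Theory.
Local Open Scope ring_scope.

Definition norm1 (R : numDomainType) (d : nat) (w : 'I_d -> R) : R :=
  \sum_(i < d) `|w i|.

Definition supp (R : numDomainType) (d : nat) (w : 'I_d -> R) : {set 'I_d} :=
  [set i | w i != 0].

Definition restrict (R : numDomainType) (d : nat) (u : 'I_d -> R) (A : {set 'I_d})
  : 'I_d -> R := fun i => if i \in A then u i else 0.

Definition DS_feasible (R : numDomainType) (d : nat) (b : 'I_d -> R)
  (H : 'I_d -> 'I_d -> R) (gamma : R) (w : 'I_d -> R) : Prop :=
  forall i : 'I_d, `|b i - \sum_(j < d) H i j * w j| <= gamma.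

Definition DS_solution (R : numDomainType) (d : nat) (b : 'I_d -> R)
  (H : 'I_d -> 'I_d -> R) (gamma : R) (w : 'I_d -> R) : Prop :=
  DS_feasible b H gamma w /\
  forall v, DS_feasible b H gamma v -> norm1 w <= norm1 v.

From mathcomp Require Import all_boot all_order all_algebra.
Import Order.TTheory GRing.Theory Num.Theory.
Local Open Scope ring_scope.

(** Hard thresholding [w*] to a set [T] of top-[k] coordinates of an estimate
[v] loses only the mass of [w*] on [A = supp w* \ T], and on [A] we have
[|w*| <= |v - w*| + |v|].  Since [|A| <= |B|] for [B = T \ supp w*], the top-[k]
property gives [sum_A |v| <= sum_B |v|], and on [B] we have [|v| = |v - w*|];
as [A] and [B] are disjoint, the total is at most [||v - w*||_1]. *)

Lemma ler_sum_card_dominated (R : numDomainType) (T : finType) (f : T -> R)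
    (A B : {set T}) :
  (#|A| <= #|B|)%N -> (forall i, 0 <= f i) ->
  (forall a b, a \in A -> b \in B -> f a <= f b) ->
  \sum_(i in A) f i <= \sum_(i in B) f i.
Proof.
move=> leAB f_ge0 le_f.
have [B0 | B_gt0] := posnP #|B|.
  have /eqP/cards0_eq -> : #|A| == 0%N by rewrite -leqn0 -B0.
  by rewrite big_set0 sumr_ge0.
have double_count : (\sum_(i in A) f i) *+ #|B| <= (\sum_(i in B) f i) *+ #|A|.
  rewrite -!sumr_const [leLHS]exchange_big /=.
  by apply: ler_sum => a aA; apply: ler_sum => b bB; apply: le_f.
have := le_trans double_count (ler_wpMn2l (sumr_ge0 _ (fun i _ => f_ge0 i)) leAB).
by rewrite lerMn2r (gtn_eqF B_gt0).
Qed.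

Lemma card_setD_le (T : finType) (A B : {set T}) :
  (#|A| <= #|B|)%N -> (#|A :\: B| <= #|B :\: A|)%N.
Proof. by rewrite -(cardsID B A) -(cardsID A B) setIC leq_add2l. Qed.

Section HardThresholding.

Variables (R : numDomainType) (d : nat).
Implicit Types (w v : 'I_d -> R) (T : {set 'I_d}).

Lemma eq_norm1 w v : w =1 v -> norm1 w = norm1 v.
Proof. by move=> eq_wv; apply: eq_bigr => i _; rewrite eq_wv. Qed.

Lemma restrict_suppI w T : restrict w (supp w :&: T) =1 restrict w T.
Proof.
move=> i; rewrite /restrict !inE.
by case: (i \in T); rewrite ?andbF ?andbT //; case: eqP.
Qed.

Lemma norm1_restrict_subr w T :
  norm1 (fun i => restrict w T i - w i) = \sum_(i in supp w :\: T) `|w i|.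
Proof.
rewrite /norm1 [RHS]big_mkcond /=; apply: eq_bigr => i _.
rewrite /restrict !inE; case: (i \in T); first by rewrite subrr normr0.
by rewrite sub0r normrN /=; case: eqP => [->|]; rewrite ?normr0.
Qed.

Lemma ler_sum_norm1 (f : 'I_d -> R) (C : {pred 'I_d}) :
  \sum_(i in C) `|f i| <= norm1 f.
Proof.
rewrite /norm1 [leLHS]big_mkcond /=.
by apply: ler_sum => i _; case: ifP.
Qed.

Lemma norm1_restrict_top_le w v T :
  (#|supp w| <= #|T|)%N ->
  (forall i j, i \in T -> j \notin T -> `|v j| <= `|v i|) ->
  norm1 (fun i => restrict w T i - w i) <= norm1 (fun i => v i - w i).
Proof.
move=> le_supp_T top_v.
set A := supp w :\: T; set B := T :\: supp w.
have disjAB : [disjoint A & B].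
  by apply/pred0P => i /=; rewrite !inE; case: (i \in T); rewrite ?andbF.
have sumA_le_sumB : \sum_(i in A) `|v i| <= \sum_(i in B) `|v i|.
  apply: ler_sum_card_dominated => // [|a b]; first exact: card_setD_le.
  by rewrite !inE => /andP[aT _] /andP[_ bT]; apply: top_v.
have sumB_eq : \sum_(i in B) `|v i| = \sum_(i in B) `|v i - w i|.
  by apply: eq_bigr => i; rewrite !inE negbK => /andP[/eqP-> _]; rewrite subr0.
have sumA_le : \sum_(i in A) `|w i| <= \sum_(i in A) (`|v i - w i| + `|v i|).
  by apply: ler_sum => i _; have := ler_normD (w i - v i) (v i); rewrite subrK distrC.
rewrite norm1_restrict_subr (le_trans sumA_le) // big_split /=.
apply: (@le_trans _ _ (\sum_(i in A) `|v i - w i| + \sum_(i in B) `|v i - w i|)).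
  by rewrite lerD2l -sumB_eq.
by rewrite -bigU //; apply: ler_sum_norm1.
Qed.

End HardThresholding.

Theorem lemma5 (R : realFieldType) (d k s : nat)
  (hk3 : (3 <= k)%N) (hkd : (k <= d - 3)%N) (hs : (1 <= s)%N)
  (wstar : 'I_d -> R)
  (hw1 : norm1 wstar <= 1) (hw0 : (#|supp wstar| <= k)%N)
  (XY : 'I_d -> R) (Hs : 'I_d -> 'I_d -> R) (gamma : R) (hgamma : 0 < gamma)
  (what : 'I_d -> R)
  (hDS : DS_solution (fun i => s%:R^-1 * XY i) (fun i j => s%:R^-1 * Hs i j)
           gamma what)
  (Ss : {set 'I_d}) (hSs : #|Ss| = k)
  (htop : forall i j, i \in Ss -> j \notin Ss -> `|what j| <= `|what i|) :
  norm1 (fun i => restrict wstar (supp wstar :&: Ss) i - wstar i)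
    <= norm1 (fun i => what i - wstar i).
Proof.
rewrite (@eq_norm1 _ _ _ (fun i => restrict wstar Ss i - wstar i)).
  by apply: norm1_restrict_top_le; rewrite ?hSs.
by move=> i; rewrite restrict_suppI.
Qed.
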